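(* A function $F\in\Delta_+$ is a Boolean max-stable law if and only if there exist $\lambda>0$ and $\alpha>0$ such that $F(t)=(1+\lambda t^{-\alpha})^{-1}$ for all $t>0$ (and $F(0)=0$).
   Context: $\Delta_+$ is the set of functions $F:[0,\infty)\to[0,1]$ that are nondecreasing, right continuous and satisfy $\lim_{t\to\infty}F(t)=1$. Define $\sqcap$ on $[0,1]$ by $(x\sqcap y)^{-1}-1=(x^{-1}-1)+(y^{-1}-1)$ (conventions $0^{-1}=+\infty$, $(+\infty)^{-1}=0$), and the Boolean max-convolution of $F,G\in\Delta_+$ by $(F\boxed{\vee}G)(t)=F(t)\sqcap G(t)$; $G^{\boxed{\vee}n}$ denotes the $n$-fold Boolean max-convolution of $G$ with itself. $F\in\Delta_+$ is Boolean max-stable if there exist $G\in\Delta_+$ and constants $a_n>0$ ($n\in\mathbb{N}$) with $G^{\boxed{\vee}n}(a_nt)\to F(t)$ as $n\to\infty$ for all $t\ge0$. *)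

From Stdlib Require Import Reals Lra.
Open Scope R_scope.

(* Delta_+ : distribution functions on [0,oo); values on t < 0 are irrelevant. *)
Definition in_Delta_plus (F : R -> R) : Prop :=
  (forall t, 0 <= t -> 0 <= F t <= 1) /\
  (forall s t, 0 <= s -> s <= t -> F s <= F t) /\
  (forall t, 0 <= t -> forall eps, 0 < eps ->
      exists delta, 0 < delta /\
        forall s, t <= s < t + delta -> Rabs (F s - F t) < eps) /\
  (forall eps, 0 < eps -> exists M, forall t, M <= t -> Rabs (F t - 1) < eps).

(* x ⊓ y defined by (x⊓y)^-1 - 1 = (x^-1 - 1) + (y^-1 - 1), with 0^-1 = +oo,
   (+oo)^-1 = 0.  For x,y in (0,1] this unfolds to xy/(x+y-xy); if x = 0 or
   y = 0 the right-hand side is +oo, hence x⊓y = 0. *)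
Definition bmeet (x y : R) : R :=
  if Req_EM_T x 0 then 0
  else if Req_EM_T y 0 then 0
  else / ((/ x - 1) + (/ y - 1) + 1).

Definition bmaxconv (F G : R -> R) : R -> R := fun t => bmeet (F t) (G t).

(* n-fold Boolean max-convolution; G^{⊔0} := 1 (the neutral element of ⊓),
   G^{⊔(n+1)} := G^{⊔n} ⊔ G, so G^{⊔1} = G. *)
Fixpoint bmaxpow (n : nat) (G : R -> R) : R -> R :=
  match n with
  | O => fun _ => 1
  | S m => bmaxconv (bmaxpow m G) G
  end.

Definition boolean_max_stable (F : R -> R) : Prop :=
  exists (G : R -> R) (a : nat -> R),
    in_Delta_plus G /\ (forall n, 0 < a n) /\
    forall t, 0 <= t -> Un_cv (fun n => bmaxpow n G (a n * t)) (F t).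

Definition degenerate (F : R -> R) : Prop :=
  exists c, 0 <= c /\ forall t, 0 <= t -> F t = (if Rlt_dec t c then 0 else 1).

From Stdlib Require Import Reals.
From Stdlib Require Import Lra Lia Classical ClassicalEpsilon ZArith.
Open Scope R_scope.

(* In the odds [/ y - 1] of a level [y], Boolean max-convolution is addition,
   so the odds of [G^{⊔n}] are [n] times those of [G].  Comparing the limit
   along [n] with the limit along [m_n ~ r n] (convergence of types) yields,
   for every [r > 0], a scale [c r] such that the odds of [F] at [c r * t] are
   those at [t] divided by [r].  Non-degeneracy makes [c] unique, hence
   multiplicative and increasing, hence a power [r ^ beta]; so the odds of [F]
   are [lambda * t ^ (- 1 / beta)].  Conversely such an [F] satisfies
   [F^{⊔n} (n ^ (1 / alpha) * t) = F t]. *)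

Lemma Rdiv_le_0_compat (a b : R) : 0 <= a -> 0 < b -> 0 <= a / b.
Proof. intros Ha Hb. apply Rmult_le_pos; [exact Ha | left; apply Rinv_0_lt_compat, Hb]. Qed.

(** * Boolean powers *)

(* In the odds [/ y - 1] of a level [y], [bpow rho] is multiplication by [rho]. *)
Definition bpow (rho y : R) : R := y / (rho * (1 - y) + y).

Section BooleanPower.

Variables (rho y : R).
Hypotheses (rho_gt0 : 0 < rho) (y_01 : 0 <= y <= 1).

Lemma bpow_den_gt0 : 0 < rho * (1 - y) + y.
Proof.
  destruct (Rle_lt_or_eq_dec 0 y (proj1 y_01)) as [Hy | <-]; [|lra].
  assert (0 <= rho * (1 - y)) by (apply Rmult_le_pos; lra). lra.
Qed.

Lemma bpow_compl : 1 - bpow rho y = rho * (1 - y) / (rho * (1 - y) + y).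
Proof. pose proof bpow_den_gt0. unfold bpow. field. lra. Qed.

Lemma bpow_01 : 0 <= bpow rho y <= 1.
Proof.
  pose proof bpow_den_gt0. pose proof bpow_compl as Hc. split.
  - apply Rdiv_le_0_compat; lra.
  - enough (0 <= rho * (1 - y) / (rho * (1 - y) + y)) by lra.
    apply Rdiv_le_0_compat; [apply Rmult_le_pos|]; lra.
Qed.

Lemma bpow_gt0 : 0 < y -> 0 < bpow rho y.
Proof. intros Hy. apply Rdiv_lt_0_compat; [exact Hy | exact bpow_den_gt0]. Qed.

Lemma bpow_lt1 : y < 1 -> bpow rho y < 1.
Proof.
  intros Hy. pose proof bpow_compl. enough (0 < rho * (1 - y) / (rho * (1 - y) + y)) by lra.
  apply Rdiv_lt_0_compat; [apply Rmult_lt_0_compat | apply bpow_den_gt0]; lra.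
Qed.

End BooleanPower.

Lemma bpow_level0 (rho : R) : bpow rho 0 = 0.
Proof. unfold bpow, Rdiv. ring. Qed.

Lemma bpow_exp1 (y : R) : bpow 1 y = y.
Proof. unfold bpow. replace (1 * (1 - y) + y) with 1 by ring. field. Qed.

Lemma bpowM (rho sigma y : R) : 0 < rho -> 0 < sigma -> 0 <= y <= 1 ->
  bpow rho (bpow sigma y) = bpow (rho * sigma) y.
Proof.
  intros Hr Hs Hy.
  pose proof (bpow_den_gt0 sigma y Hs Hy).
  pose proof (bpow_den_gt0 (rho * sigma) y ltac:(nra) Hy).
  unfold bpow at 2. unfold bpow. field. split; [nra | lra].
Qed.

Lemma bpow_le (rho y1 y2 : R) : 0 < rho -> 0 <= y1 -> y1 <= y2 -> y2 <= 1 ->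
  bpow rho y1 <= bpow rho y2.
Proof.
  intros Hr H1 H12 H2.
  pose proof (bpow_den_gt0 rho y1 Hr ltac:(lra)).
  pose proof (bpow_den_gt0 rho y2 Hr ltac:(lra)).
  replace (bpow rho y2) with (bpow rho y1 + rho * (y2 - y1)
      / ((rho * (1 - y1) + y1) * (rho * (1 - y2) + y2))) by (unfold bpow; field; lra).
  enough (0 <= rho * (y2 - y1) / ((rho * (1 - y1) + y1) * (rho * (1 - y2) + y2))) by lra.
  apply Rdiv_le_0_compat; [apply Rmult_le_pos | apply Rmult_lt_0_compat]; lra.
Qed.

Lemma bpow_lt_exponent (rho1 rho2 y : R) : 0 < rho1 -> rho1 < rho2 -> 0 < y < 1 ->
  bpow rho2 y < bpow rho1 y.
Proof.
  intros Hr H12 Hy.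
  pose proof (bpow_den_gt0 rho1 y Hr ltac:(lra)).
  pose proof (bpow_den_gt0 rho2 y ltac:(lra) ltac:(lra)).
  replace (bpow rho1 y) with (bpow rho2 y + y * (1 - y) * (rho2 - rho1)
      / ((rho1 * (1 - y) + y) * (rho2 * (1 - y) + y))) by (unfold bpow; field; lra).
  enough (0 < y * (1 - y) * (rho2 - rho1) / ((rho1 * (1 - y) + y) * (rho2 * (1 - y) + y)))
    by lra.
  apply Rdiv_lt_0_compat; [apply Rmult_lt_0_compat; [apply Rmult_lt_0_compat|] |
    apply Rmult_lt_0_compat]; lra.
Qed.

Lemma bpow_level1 (rho : R) : bpow rho 1 = 1.
Proof. unfold bpow. replace (rho * (1 - 1) + 1) with 1 by ring. field. Qed.

Lemma bpow_inv_1p (rho u : R) : 0 <= rho -> 0 <= u -> bpow rho (/ (1 + u)) = / (1 + rho * u).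
Proof.
  intros Hr Hu. unfold bpow.
  replace (rho * (1 - / (1 + u)) + / (1 + u)) with ((1 + rho * u) / (1 + u)) by (field; lra).
  field. split; nra.
Qed.

Lemma bpow_continuity_pt (rho y : R) : 0 < rho -> 0 <= y <= 1 -> continuity_pt (bpow rho) y.
Proof. intros Hr Hy. pose proof (bpow_den_gt0 rho y Hr Hy). unfold bpow. reg. lra. Qed.

Lemma bmeet_bpow (rho y : R) : 0 < rho -> 0 <= y <= 1 ->
  bmeet (bpow rho y) y = bpow (rho + 1) y.
Proof.
  intros Hr Hy. unfold bmeet.
  destruct (Req_EM_T y 0) as [-> | Hy0].
  - rewrite !bpow_level0. destruct (Req_EM_T 0 0); reflexivity.
  - pose proof (bpow_gt0 rho y Hr Hy ltac:(lra)).
    destruct (Req_EM_T (bpow rho y) 0); [lra|].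
    pose proof (bpow_den_gt0 rho y Hr Hy).
    pose proof (bpow_den_gt0 (rho + 1) y ltac:(lra) Hy).
    unfold bpow. field. repeat split; lra.
Qed.

Lemma bmeet_1l (y : R) : bmeet 1 y = y.
Proof.
  unfold bmeet. destruct (Req_EM_T 1 0); [lra|].
  destruct (Req_EM_T y 0) as [-> | Hy]; [reflexivity|]. field. lra.
Qed.

Lemma bmaxpow_bpow (G : R -> R) (n : nat) (x : R) : (1 <= n)%nat -> 0 <= G x <= 1 ->
  bmaxpow n G x = bpow (INR n) (G x).
Proof.
  intros Hn Hx. destruct n as [|n]; [lia|]. clear Hn.
  induction n as [|n IH].
  - simpl. unfold bmaxconv. rewrite bmeet_1l, bpow_exp1. reflexivity.
  - change (bmeet (bmaxpow (S n) G x) (G x) = bpow (INR (S (S n))) (G x)).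
    rewrite IH, bmeet_bpow, <- S_INR by (auto; apply lt_0_INR; lia). reflexivity.
Qed.

Definition eventually (P : nat -> Prop) : Prop :=
  exists N, forall n, (N <= n)%nat -> P n.

Definition frequently (P : nat -> Prop) : Prop :=
  forall N, exists n, (N <= n)%nat /\ P n.

Lemma eventually_frequently (P : nat -> Prop) : eventually P -> frequently P.
Proof. intros [N HN] M. exists (max N M). split; [lia | apply HN; lia]. Qed.

Lemma not_frequently (P : nat -> Prop) : ~ frequently P -> eventually (fun n => ~ P n).
Proof.
  intros HP. apply NNPP. intros Hev. apply HP. intros N.
  apply NNPP. intros Hn. apply Hev. exists N. intros n Hle HPn. apply Hn. now exists n.
Qed.

Lemma frequently_eventually (P Q : nat -> Prop) :
  frequently P -> eventually Q -> exists n, P n /\ Q n.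
Proof. intros HP [N HQ]. destruct (HP N) as [n [Hn HPn]]. exists n. auto. Qed.

Lemma Un_cv_const (x : R) : Un_cv (fun _ => x) x.
Proof.
  intros eps Heps. exists 0%nat. intros n _.
  unfold Rdist. rewrite Rminus_diag, Rabs_R0. exact Heps.
Qed.

Lemma Un_cv_eventually_ext (u v : nat -> R) (l : R) :
  eventually (fun n => u n = v n) -> Un_cv u l -> Un_cv v l.
Proof.
  intros [N HN] Hu eps Heps. destruct (Hu eps Heps) as [M HM].
  exists (max N M). intros n Hn. rewrite <- HN by lia. apply HM. lia.
Qed.

Lemma Un_cv_subseq (u : nat -> R) (m : nat -> nat) (l : R) :
  (forall N, eventually (fun n => (N <= m n)%nat)) -> Un_cv u l -> Un_cv (fun n => u (m n)) l.
Proof.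
  intros Hm Hu eps Heps. destruct (Hu eps Heps) as [N HN]. destruct (Hm N) as [M HM].
  exists M. intros n Hn. apply HN, HM, Hn.
Qed.

Lemma Un_cv_lt_eventually (u v : nat -> R) (l1 l2 : R) :
  Un_cv u l1 -> Un_cv v l2 -> l1 < l2 -> eventually (fun n => u n < v n).
Proof.
  intros Hu Hv Hl.
  destruct (Hu ((l2 - l1) / 2) ltac:(lra)) as [N1 H1].
  destruct (Hv ((l2 - l1) / 2) ltac:(lra)) as [N2 H2].
  exists (max N1 N2). intros n Hn.
  specialize (H1 n ltac:(lia)). specialize (H2 n ltac:(lia)).
  unfold Rdist in *. apply Rabs_def2 in H1. apply Rabs_def2 in H2. lra.
Qed.

Lemma Un_cv_le_frequently (u v : nat -> R) (l1 l2 : R) :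
  Un_cv u l1 -> Un_cv v l2 -> frequently (fun n => u n <= v n) -> l1 <= l2.
Proof.
  intros Hu Hv Hfr. destruct (Rle_or_lt l1 l2) as [|Hl]; [assumption|].
  destruct (Un_cv_lt_eventually v u l2 l1 Hv Hu Hl) as [N HN].
  destruct (Hfr N) as [n [Hn Huv]]. specialize (HN n Hn). lra.
Qed.

Lemma Un_cv_bpow (r y : nat -> R) (rho y0 : R) :
  0 < rho -> 0 <= y0 <= 1 -> (forall n, 0 <= y n <= 1) ->
  Un_cv r rho -> Un_cv y y0 -> Un_cv (fun n => bpow (r n) (y n)) (bpow rho y0).
Proof.
  intros Hrho Hy0 Hy Hr Hcv.
  assert (Hden : Un_cv (fun n => r n * (1 - y n) + y n) (rho * (1 - y0) + y0)).
  { apply CV_plus; [apply CV_mult; [|apply CV_minus; [apply Un_cv_const|]]|]; assumption. }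
  apply CV_mult; [exact Hcv|].
  apply (continuity_seq Rinv _ _); [|exact Hden].
  apply continuity_pt_inv; [apply derivable_continuous_pt, derivable_pt_id|].
  pose proof (bpow_den_gt0 rho y0 Hrho Hy0). lra.
Qed.

Lemma Un_cv_bpow_INR_0 (y : R) : 0 <= y < 1 -> Un_cv (fun n => bpow (INR n) y) 0.
Proof.
  intros Hy. rewrite <- (Rmult_0_r y). apply CV_mult; [apply Un_cv_const|].
  apply cv_infty_cv_0. intros M.
  destruct (INR_archimed (1 - y) M ltac:(lra)) as [N HN]. exists N. intros n Hn.
  pose proof (le_INR _ _ Hn). nra.
Qed.

Definition nat_up (x : R) : nat := Z.to_nat (up x).

Lemma nat_up_spec (x : R) : 0 <= x -> x < INR (nat_up x) <= x + 1.
Proof.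
  intros Hx. unfold nat_up. destruct (archimed x) as [H1 H2].
  assert (Hz : (0 <= up x)%Z) by (apply le_IZR; lra).
  rewrite INR_IZR_INZ, Z2Nat.id by exact Hz. lra.
Qed.

Section ScaledIndex.

Variable r : R.
Hypothesis r_gt0 : 0 < r.

Lemma nat_up_mul_bounds (n : nat) :
  r * INR n < INR (nat_up (r * INR n)) <= r * INR n + 1.
Proof. apply nat_up_spec. apply Rmult_le_pos; [lra | apply pos_INR]. Qed.

Lemma nat_up_mul_ge1 (n : nat) : (1 <= nat_up (r * INR n))%nat.
Proof.
  destruct (nat_up_mul_bounds n) as [H _]. pose proof (pos_INR n).
  apply INR_lt. simpl. nra.
Qed.

Lemma nat_up_mul_unbounded (N : nat) : eventually (fun n => (N <= nat_up (r * INR n))%nat).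
Proof.
  destruct (INR_archimed r (INR N) r_gt0) as [M HM]. exists M. intros n Hn.
  pose proof (le_INR _ _ Hn). destruct (nat_up_mul_bounds n) as [Hup _].
  apply INR_le. nra.
Qed.

Lemma nat_up_mul_ratio : Un_cv (fun n => INR n / INR (nat_up (r * INR n))) (/ r).
Proof.
  intros eps Heps.
  destruct (INR_archimed (eps * r * r) 1 ltac:(repeat apply Rmult_lt_0_compat; lra))
    as [N HN].
  exists N. intros n Hn. pose proof (le_INR _ _ Hn).
  destruct (nat_up_mul_bounds n) as [H1 H2].
  set (m := INR (nat_up (r * INR n))) in *.
  assert (Hm : 0 < m) by (pose proof (pos_INR n); nra).
  replace (INR n / m) with (/ r + (INR n * r - m) * / (r * m)) by (field; lra).
  assert (Hrm : 1 < eps * (r * m)).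
  { assert (eps * r * r * INR N <= eps * r * r * INR n)
      by (apply Rmult_le_compat_l; [repeat apply Rmult_le_pos|]; lra).
    assert (eps * r * (r * INR n) < eps * r * m)
      by (apply Rmult_lt_compat_l; [apply Rmult_lt_0_compat|]; lra).
    nra. }
  assert (Hi : / (r * m) < eps).
  { apply (Rmult_lt_reg_r (r * m)); [nra|]. rewrite Rinv_l; nra. }
  assert (0 < / (r * m)) by (apply Rinv_0_lt_compat; nra).
  unfold Rdist. apply Rabs_def1; nra.
Qed.

End ScaledIndex.

(** * Convergence of types *)

Lemma upper_limit_exists (b : nat -> R) (lo hi : R) :
  eventually (fun n => lo < b n) -> eventually (fun n => b n < hi) ->
  exists c, lo <= c /\
    (forall c', c < c' -> eventually (fun n => b n <= c')) /\
    (forall c', c' < c -> frequently (fun n => c' < b n)).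
Proof.
  intros Hlo Hhi.
  set (E := fun y => frequently (fun n => y < b n)).
  assert (E_bound : bound E).
  { exists hi. intros y Ey. destruct (frequently_eventually _ _ Ey Hhi) as [n Hn]. lra. }
  destruct (completeness E E_bound (ex_intro _ lo (eventually_frequently _ Hlo)))
    as [c [c_ub c_lub]].
  exists c. split; [apply c_ub, eventually_frequently, Hlo|]. split.
  - intros c' Hc'. destruct (not_frequently (fun n => c' < b n)) as [N HN].
    + intros Ec'. specialize (c_ub c' Ec'). lra.
    + exists N. intros n Hn. apply Rnot_lt_le, HN, Hn.
  - intros c' Hc'. apply NNPP. intros Hnot.
    enough (c <= c') by lra. apply c_lub. intros y Ey.
    destruct (Rle_or_lt y c') as [|Hy]; [assumption|]. exfalso. apply Hnot.
    intros N. destruct (Ey N) as [n [Hn Hbn]]. exists n. split; [exact Hn | lra].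
Qed.

Definition right_continuous_at (f : R -> R) (t : R) : Prop :=
  forall eps, 0 < eps -> exists delta, 0 < delta /\
    forall s, t <= s < t + delta -> Rabs (f s - f t) < eps.

Lemma right_continuous_at_comp (g f : R -> R) (t : R) :
  continuity_pt g (f t) -> right_continuous_at f t -> right_continuous_at (fun s => g (f s)) t.
Proof.
  intros Hg Hf eps Heps. destruct (Hg eps Heps) as [alpha [Halpha Hgalpha]].
  destruct (Hf alpha Halpha) as [delta [Hdelta Hfdelta]].
  exists delta. split; [exact Hdelta|]. intros s Hs.
  destruct (Req_dec (f s) (f t)) as [-> | Hne].
  - rewrite Rminus_diag, Rabs_R0. exact Heps.
  - apply (Hgalpha (f s)). split; [split; [constructor | auto] | apply Hfdelta, Hs].
Qed.

Section ConvergenceOfTypes.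

Variables (H : nat -> R -> R) (b : nat -> R) (U V : R -> R).
Hypotheses (H_le : forall n x y, 0 <= x -> x <= y -> H n x <= H n y)
  (b_gt0 : forall n, 0 < b n)
  (H_cv : forall t, 0 <= t -> Un_cv (fun n => H n t) (U t))
  (Hb_cv : forall t, 0 <= t -> Un_cv (fun n => H n (b n * t)) (V t))
  (U_rc : forall t, 0 <= t -> right_continuous_at U t)
  (V_rc : forall t, 0 <= t -> right_continuous_at V t).

Lemma H_lt_inv (n : nat) (x y : R) : 0 <= y -> H n x < H n y -> x < y.
Proof.
  intros Hy Hlt. destruct (Rlt_or_le x y) as [|Hyx]; [assumption|].
  pose proof (H_le n y x Hy Hyx). lra.
Qed.

Lemma types_le_above (c t : R) : 0 <= c -> 0 <= t ->
  eventually (fun n => b n <= c) -> V t <= U (c * t).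
Proof.
  intros Hc Ht Hev.
  apply (Un_cv_le_frequently _ _ _ _ (Hb_cv t Ht) (H_cv (c * t) ltac:(nra))).
  apply eventually_frequently. destruct Hev as [N HN]. exists N. intros n Hn.
  apply H_le; [pose proof (b_gt0 n); nra | apply Rmult_le_compat_r; auto].
Qed.

Lemma types_ge_below (c t : R) : 0 <= c -> 0 <= t ->
  frequently (fun n => c < b n) -> U (c * t) <= V t.
Proof.
  intros Hc Ht Hfr.
  apply (Un_cv_le_frequently _ _ _ _ (H_cv (c * t) ltac:(nra)) (Hb_cv t Ht)).
  intros N. destruct (Hfr N) as [n [Hn Hcb]]. exists n. split; [exact Hn|].
  apply H_le; [nra | apply Rmult_le_compat_r; lra].
Qed.

Variable t0 : R.
Hypotheses (t0_gt0 : 0 < t0) (U0_lt_Vt0 : U 0 < V t0).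

Lemma types_scale_lower : exists eps, 0 < eps /\ eventually (fun n => eps < b n).
Proof.
  destruct (U_rc 0 (Rle_refl 0) (V t0 - U 0) ltac:(lra)) as [d [Hd HUd]].
  set (eps := d / (2 * t0)).
  assert (Heps : eps * t0 = d / 2) by (unfold eps; field; lra).
  assert (HU : U (eps * t0) < V t0).
  { rewrite Heps. specialize (HUd (d / 2) ltac:(lra)). apply Rabs_def2 in HUd. lra. }
  exists eps. split; [unfold eps; apply Rdiv_lt_0_compat; lra|].
  destruct (Un_cv_lt_eventually _ _ _ _ (H_cv (eps * t0) ltac:(lra)) (Hb_cv t0 ltac:(lra)) HU)
    as [N HN].
  exists N. intros n Hn. pose proof (b_gt0 n).
  apply (Rmult_lt_reg_r t0); [lra|]. apply (H_lt_inv n); [nra | apply HN, Hn].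
Qed.

Lemma types_scale_upper (M : R) : 0 <= M -> V t0 < U (M * t0) ->
  eventually (fun n => b n < M).
Proof.
  intros HM HVU.
  destruct (Un_cv_lt_eventually _ _ _ _ (Hb_cv t0 ltac:(lra)) (H_cv (M * t0) ltac:(nra)) HVU)
    as [N HN].
  exists N. intros n Hn.
  apply (Rmult_lt_reg_r t0); [lra|]. apply (H_lt_inv n); [nra | apply HN, Hn].
Qed.

Theorem convergence_of_types (M : R) : 0 <= M -> V t0 < U (M * t0) ->
  exists c, 0 < c /\ forall t, 0 < t -> V t = U (c * t).
Proof.
  intros HM HVU.
  (* [c] is the upper limit of [b]; right-continuity of [U] at [c * t] and of
     [V] at [t] closes the gap between the two one-sided comparisons. *)
  destruct types_scale_lower as [eps [Heps Hlo]].
  destruct (upper_limit_exists b eps M Hlo (types_scale_upper M HM HVU))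
    as [c [Hc [Habove Hbelow]]].
  exists c. split; [lra|]. intros t Ht. apply Rle_antisym.
  - destruct (Rle_or_lt (V t) (U (c * t))) as [|Hlt]; [assumption|]. exfalso.
    destruct (U_rc (c * t) ltac:(nra) (V t - U (c * t)) ltac:(lra)) as [d [Hd HUd]].
    set (c' := c + d / (2 * t)).
    assert (Hc't : c' * t = c * t + d / 2) by (unfold c'; field; lra).
    assert (Hcc' : c < c').
    { unfold c'. assert (0 < d / (2 * t)) by (apply Rdiv_lt_0_compat; lra). lra. }
    pose proof (types_le_above c' t ltac:(lra) ltac:(lra) (Habove c' Hcc')).
    specialize (HUd (c' * t) ltac:(lra)). apply Rabs_def2 in HUd. lra.
  - destruct (Rle_or_lt (U (c * t)) (V t)) as [|Hlt]; [assumption|]. exfalso.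
    destruct (V_rc t ltac:(lra) (U (c * t) - V t) ltac:(lra)) as [d [Hd HVd]].
    set (t' := t + d / 2).
    set (c' := c * t / t').
    assert (Hc't' : c' * t' = c * t) by (unfold c', t'; field; lra).
    assert (Hc' : 0 <= c') by (unfold c', t'; apply Rdiv_le_0_compat; nra).
    assert (Hc'c : c' < c).
    { unfold c', t'. apply (Rmult_lt_reg_r (t + d / 2)); [lra|].
      unfold Rdiv. rewrite Rmult_assoc, Rinv_l by lra. nra. }
    pose proof (types_ge_below c' t' Hc' ltac:(unfold t'; lra) (Hbelow c' Hc'c)).
    specialize (HVd t' ltac:(unfold t'; lra)). apply Rabs_def2 in HVd.
    rewrite Hc't' in *. lra.
Qed.

End ConvergenceOfTypes.

(** * Monotone solutions of Cauchy's equation *)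

Section AdditiveFunction.

Variable L : R -> R.
Hypothesis Ladd : forall x y, L (x + y) = L x + L y.

Lemma additive_0 : L 0 = 0.
Proof. pose proof (Ladd 0 0) as H. rewrite Rplus_0_r in H. lra. Qed.

Lemma additive_INR_mul (n : nat) (x : R) : L (INR n * x) = INR n * L x.
Proof.
  induction n as [|n IH].
  - rewrite !Rmult_0_l. exact additive_0.
  - rewrite S_INR, !Rmult_plus_distr_r, Ladd, IH, !Rmult_1_l. reflexivity.
Qed.

Lemma additive_IZR (z : Z) : L (IZR z) = IZR z * L 1.
Proof.
  destruct (Z_le_gt_dec 0 z) as [Hz | Hz].
  - pose proof (additive_INR_mul (Z.to_nat z) 1) as H.
    rewrite Rmult_1_r, INR_IZR_INZ, Z2Nat.id in H by exact Hz. exact H.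
  - replace (IZR z) with (- (INR (Z.to_nat (- z)) * 1))
      by (rewrite INR_IZR_INZ, Z2Nat.id, opp_IZR by lia; ring).
    pose proof (Ladd (INR (Z.to_nat (- z)) * 1) (- (INR (Z.to_nat (- z)) * 1))) as H.
    rewrite Rplus_opp_r, additive_0, additive_INR_mul in H. lra.
Qed.

Lemma additive_monotone_linear :
  (forall x y, x <= y -> L x <= L y) -> forall x, L x = L 1 * x.
Proof.
  intros Lle.
  assert (L1 : 0 <= L 1) by (rewrite <- additive_0; apply Lle; lra).
  intros x.
  (* [n x] lies between consecutive integers, so [n (L x - L 1 x)] is at most [L 1]. *)
  assert (Hbound : forall n, INR n * Rabs (L x - L 1 * x) <= L 1).
  { intros n. destruct (archimed (INR n * x)) as [Hup1 Hup2].
    set (k := up (INR n * x)) in *.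
    pose proof (Lle _ _ (Rlt_le _ _ Hup1)) as Hhi.
    pose proof (Lle (IZR (k - 1)) (INR n * x) ltac:(rewrite minus_IZR; lra)) as Hlo.
    rewrite additive_INR_mul, additive_IZR in Hhi.
    rewrite additive_INR_mul, additive_IZR, minus_IZR in Hlo.
    rewrite <- (Rabs_right (INR n)) by (apply Rle_ge, pos_INR).
    rewrite <- Rabs_mult. apply Rabs_le. split; nra. }
  destruct (Req_dec (L x - L 1 * x) 0) as [E|E]; [lra|]. exfalso.
  pose proof (Rabs_pos_lt _ E) as Hd.
  destruct (INR_archimed _ (L 1) Hd) as [n Hn]. specialize (Hbound n). lra.
Qed.

End AdditiveFunction.

Lemma increasing_multiplicative_power (f : R -> R) :
  (forall r, 0 < r -> 0 < f r) ->
  (forall r s, 0 < r -> 0 < s -> f (r * s) = f r * f s) ->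
  (forall r s, 0 < r -> r < s -> f r < f s) ->
  exists beta, 0 < beta /\ forall r, 0 < r -> f r = Rpower r beta.
Proof.
  intros f_gt0 fM f_lt.
  set (L := fun x => ln (f (exp x))).
  assert (Ladd : forall x y, L (x + y) = L x + L y).
  { intros x y. unfold L. rewrite exp_plus, fM, ln_mult by (apply exp_pos || apply f_gt0, exp_pos).
    reflexivity. }
  assert (Lle : forall x y, x <= y -> L x <= L y).
  { intros x y [Hlt | ->]; [|lra]. left. unfold L.
    apply ln_increasing; [apply f_gt0, exp_pos | apply f_lt; [apply exp_pos | apply exp_increasing, Hlt]]. }
  assert (f1 : f 1 = 1).
  { pose proof (fM 1 1 Rlt_0_1 Rlt_0_1) as H. rewrite Rmult_1_l in H.
    pose proof (f_gt0 1 Rlt_0_1). nra. }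
  exists (L 1). split.
  - assert (Hlt : f 1 < f (exp 1)) by (apply f_lt; pose proof (exp_ineq1_le 1); lra).
    rewrite f1 in Hlt. unfold L. rewrite <- ln_1. apply ln_increasing; lra.
  - intros r Hr. unfold Rpower. rewrite <- (additive_monotone_linear L Ladd Lle).
    unfold L. rewrite (exp_ln r Hr), exp_ln by (apply f_gt0, Hr). reflexivity.
Qed.

Section DistributionFunction.

Variable F : R -> R.
Hypothesis HF : in_Delta_plus F.

Lemma Delta_plus_01 (t : R) : 0 <= t -> 0 <= F t <= 1.
Proof. apply (proj1 HF). Qed.

Lemma Delta_plus_le (s t : R) : 0 <= s -> s <= t -> F s <= F t.
Proof. apply (proj1 (proj2 HF)). Qed.

Lemma Delta_plus_right_continuous (t : R) : 0 <= t -> right_continuous_at F t.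
Proof. exact (proj1 (proj2 (proj2 HF)) t). Qed.

Lemma Delta_plus_exceeds (y : R) : y < 1 -> exists s, 0 <= s /\ y < F s.
Proof.
  intros Hy. destruct (proj2 (proj2 (proj2 HF)) (1 - y) ltac:(lra)) as [M HM].
  exists (Rabs M). split; [apply Rabs_pos|].
  specialize (HM (Rabs M) (Rle_abs M)). apply Rabs_def2 in HM. lra.
Qed.

Lemma two_valued_degenerate :
  (forall t, 0 <= t -> F t = 0 \/ F t = 1) -> degenerate F.
Proof.
  intros H01.
  destruct (H01 0 (Rle_refl 0)) as [F0 | F1].
  2:{ exists 0. split; [lra|]. intros t Ht. destruct (Rlt_dec t 0) as [|_]; [lra|].
    pose proof (Delta_plus_le 0 t (Rle_refl 0) Ht). pose proof (Delta_plus_01 t Ht). lra. }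
  set (E := fun t => 0 <= t /\ F t = 0).
  destruct (Delta_plus_exceeds 0 Rlt_0_1) as [M [HM HFM]].
  assert (E_bound : bound E).
  { exists M. intros t [Ht Et]. destruct (Rle_or_lt t M) as [|HMt]; [assumption|].
    pose proof (Delta_plus_le M t HM (Rlt_le _ _ HMt)). lra. }
  destruct (completeness E E_bound (ex_intro _ 0 (conj (Rle_refl 0) F0))) as [c [c_ub c_lub]].
  assert (Hc : 0 <= c) by (apply c_ub; split; [lra | exact F0]).
  exists c. split; [exact Hc|]. intros t Ht. destruct (Rlt_dec t c) as [Htc | Htc].
  - destruct (classic (exists e, E e /\ t < e)) as [[e [[He Fe] Hte]] | Hno].
    + pose proof (Delta_plus_le t e Ht (Rlt_le _ _ Hte)). pose proof (Delta_plus_01 t Ht). lra.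
    + enough (c <= t) by lra. apply c_lub. intros e Ee.
      apply Rnot_lt_le. intros Hte. apply Hno. now exists e.
  - destruct (H01 t Ht) as [Ft | Ft]; [exfalso | exact Ft].
    assert (Hct : t = c) by (pose proof (c_ub t (conj Ht Ft)); lra). subst t.
    destruct (Delta_plus_right_continuous c Hc (1 / 2) ltac:(lra)) as [d [Hd HFd]].
    specialize (HFd (c + d / 2) ltac:(lra)). rewrite Ft in HFd. apply Rabs_def2 in HFd.
    destruct (H01 (c + d / 2) ltac:(lra)) as [Fcd | Fcd]; [|lra].
    assert (E (c + d / 2)) as Ecd by (split; [lra | exact Fcd]).
    pose proof (c_ub _ Ecd). lra.
Qed.

Lemma nondegenerate_level : ~ degenerate F -> exists t0, 0 <= t0 /\ 0 < F t0 < 1.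
Proof.
  intros Hnd. apply NNPP. intros Hno. apply Hnd, two_valued_degenerate. intros t Ht.
  destruct (Delta_plus_01 t Ht) as [[H0 | H0] [H1 | H1]]; auto.
  exfalso. apply Hno. now exists t.
Qed.

Lemma Delta_plus_not_dilation_invariant (t0 rho : R) : 0 < t0 -> F t0 < 1 -> 1 < rho ->
  ~ (forall s, 0 <= s -> F (rho * s) = F s).
Proof.
  intros Ht0 Ft0 Hrho Hinv.
  assert (Fpow : forall k, F (rho ^ k * t0) = F t0).
  { induction k as [|k IH]; [simpl; rewrite Rmult_1_l; reflexivity|].
    simpl. rewrite Rmult_assoc, Hinv; [exact IH|].
    apply Rmult_le_pos; [apply pow_le|]; lra. }
  destruct (Delta_plus_exceeds (F t0) Ft0) as [s [Hs HFs]].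
  destruct (Pow_x_infinity rho ltac:(rewrite Rabs_right; lra) (s / t0)) as [N HN].
  specialize (HN N (le_n N)). rewrite Rabs_right in HN by (apply Rle_ge, pow_le; lra).
  assert (Hst : s <= rho ^ N * t0).
  { replace s with (s / t0 * t0) by (field; lra). apply Rmult_le_compat_r; lra. }
  pose proof (Delta_plus_le s _ Hs Hst). rewrite Fpow in *. lra.
Qed.

End DistributionFunction.

(** * Boolean max-stable laws *)

Definition stable_scale (F : R -> R) (r c : R) : Prop :=
  0 < c /\ forall t, 0 <= t -> F (c * t) = bpow (/ r) (F t).

Section BooleanMaxStable.

Variables (F G : R -> R) (a : nat -> R).
Hypotheses (HF : in_Delta_plus F) (HG : in_Delta_plus G) (a_gt0 : forall n, 0 < a n)
  (F_lim : forall t, 0 <= t -> Un_cv (fun n => bmaxpow n G (a n * t)) (F t)).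

Lemma bmaxpow_le (n : nat) (x y : R) : 0 <= x -> x <= y -> bmaxpow n G x <= bmaxpow n G y.
Proof.
  intros Hx Hxy. destruct n as [|n]; [simpl; lra|].
  assert (0 < INR (S n)) by (apply lt_0_INR; lia).
  rewrite !bmaxpow_bpow by (lia || apply (Delta_plus_01 G HG); lra).
  apply bpow_le; [assumption | apply (Delta_plus_01 G HG); lra | apply (Delta_plus_le G HG); lra |
    apply (Delta_plus_01 G HG); lra].
Qed.

Lemma max_stable_at0 : ~ degenerate F -> F 0 = 0.
Proof.
  intros Hnd.
  assert (Hlim0 : Un_cv (fun n => bmaxpow n G 0) (F 0)).
  { apply (Un_cv_ext (fun n => bmaxpow n G (a n * 0))); [intros n; now rewrite Rmult_0_r|].
    apply F_lim, Rle_refl. }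
  destruct (Delta_plus_01 G HG 0 (Rle_refl 0)) as [G0 [G0_lt1 | G0_1]].
  - apply (UL_sequence _ _ _ Hlim0).
    apply (Un_cv_eventually_ext (fun n => bpow (INR n) (G 0))); [|apply Un_cv_bpow_INR_0; lra].
    exists 1%nat. intros n Hn. symmetry. apply bmaxpow_bpow; [exact Hn | lra].
  - exfalso. apply Hnd. exists 0. split; [lra|]. intros t Ht.
    destruct (Rlt_dec t 0) as [|_]; [lra|].
    apply (UL_sequence _ _ _ (F_lim t Ht)).
    apply (Un_cv_eventually_ext (fun _ => 1)); [|apply Un_cv_const].
    exists 1%nat. intros n Hn.
    assert (Hx : 0 <= a n * t) by (pose proof (a_gt0 n); nra).
    assert (HG1 : G (a n * t) = 1).
    { pose proof (Delta_plus_le G HG 0 _ (Rle_refl 0) Hx).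
      pose proof (Delta_plus_01 G HG _ Hx). lra. }
    rewrite bmaxpow_bpow by (lra || exact Hn). rewrite HG1, bpow_level1. reflexivity.
Qed.

Lemma max_stable_rescaled_limit (r t : R) : 0 < r -> 0 <= t ->
  Un_cv (fun n => bmaxpow n G (a (nat_up (r * INR n)) * t)) (bpow (/ r) (F t)).
Proof.
  intros Hr Ht. set (m := fun n => nat_up (r * INR n)).
  assert (Hx : forall k, 0 <= a k * t) by (intros k; pose proof (a_gt0 k); nra).
  assert (Hsub : Un_cv (fun n => bmaxpow (m n) G (a (m n) * t)) (F t))
    by exact (Un_cv_subseq _ m _ (nat_up_mul_unbounded r Hr) (F_lim t Ht)).
  apply (Un_cv_eventually_ext (fun n => bpow (INR n / INR (m n)) (bmaxpow (m n) G (a (m n) * t)))).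
  - exists 1%nat. intros n Hn.
    assert (0 < INR (m n)) by (apply lt_0_INR, (nat_up_mul_ge1 r Hr)).
    assert (0 < INR n) by (apply lt_0_INR; lia).
    change (bpow (INR n / INR (m n)) (bmaxpow (m n) G (a (m n) * t)) = bmaxpow n G (a (m n) * t)).
    pose proof (Delta_plus_01 G HG _ (Hx (m n))) as HG01.
    rewrite (bmaxpow_bpow G n _ Hn HG01), (bmaxpow_bpow G (m n) _ (nat_up_mul_ge1 r Hr n) HG01).
    rewrite bpowM by (try apply Rdiv_lt_0_compat; assumption).
    f_equal. field. lra.
  - apply Un_cv_bpow; [apply Rinv_0_lt_compat, Hr | apply (Delta_plus_01 F HF), Ht | |
      apply (nat_up_mul_ratio r Hr) | exact Hsub].
    intros n. destruct (m n) as [|k]; [simpl; lra|].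
    rewrite bmaxpow_bpow by (lia || apply (Delta_plus_01 G HG), Hx).
    apply bpow_01; [apply lt_0_INR; lia | apply (Delta_plus_01 G HG), Hx].
Qed.

Lemma max_stable_scale_exists (t0 : R) : F 0 = 0 -> 0 < t0 -> 0 < F t0 < 1 ->
  forall r, 0 < r -> exists c, stable_scale F r c.
Proof.
  intros F0 Ht0 Ft0 r Hr.
  set (V := fun t => bpow (/ r) (F t)).
  assert (Hr' : 0 < / r) by (apply Rinv_0_lt_compat, Hr).
  assert (HV0 : 0 < V t0 < 1) by (split; [apply bpow_gt0 | apply bpow_lt1]; lra).
  destruct (Delta_plus_exceeds F HF (V t0) ltac:(lra)) as [s [Hs HFs]].
  destruct (convergence_of_types (fun n x => bmaxpow n G (a n * x))
    (fun n => a (nat_up (r * INR n)) / a n) F V) with (t0 := t0) (M := s / t0)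
    as [c [Hc HVc]].
  - intros n x y Hx Hxy. pose proof (a_gt0 n). apply bmaxpow_le; [|apply Rmult_le_compat_l]; nra.
  - intros n. apply Rdiv_lt_0_compat; apply a_gt0.
  - exact F_lim.
  - intros t Ht. apply (Un_cv_ext (fun n => bmaxpow n G (a (nat_up (r * INR n)) * t))).
    + intros n. pose proof (a_gt0 n). f_equal. field. lra.
    + apply max_stable_rescaled_limit; assumption.
  - apply (Delta_plus_right_continuous F HF).
  - intros t Ht. apply (right_continuous_at_comp (bpow (/ r)) F t).
    + apply bpow_continuity_pt; [exact Hr' | apply (Delta_plus_01 F HF), Ht].
    + apply (Delta_plus_right_continuous F HF), Ht.
  - exact Ht0.
  - rewrite F0. apply HV0.
  - apply Rdiv_le_0_compat; lra.
  - replace (s / t0 * t0) with s by (field; lra). exact HFs.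
  - exists c. split; [exact Hc|]. intros t Ht. destruct Ht as [Ht | <-].
    + symmetry. apply HVc, Ht.
    + rewrite Rmult_0_r, F0, bpow_level0. reflexivity.
Qed.

End BooleanMaxStable.

Section StableScale.

Variables (F : R -> R) (t0 : R).
Hypotheses (HF : in_Delta_plus F) (t0_gt0 : 0 < t0) (Ft0 : 0 < F t0 < 1).

Lemma stable_scale_unique (r c1 c2 : R) :
  stable_scale F r c1 -> stable_scale F r c2 -> c1 = c2.
Proof.
  assert (Hlt : forall c1 c2, stable_scale F r c1 -> stable_scale F r c2 -> ~ c1 < c2).
  { intros d1 d2 [Hd1 F1] [Hd2 F2] Hd.
    apply (Delta_plus_not_dilation_invariant F HF t0 (d2 / d1)); [lra | lra | |].
    - apply (Rmult_lt_reg_r d1); [lra|]. unfold Rdiv. rewrite Rmult_assoc, Rinv_l; lra.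
    - intros s Hs. assert (Hsd : 0 <= s / d1) by (apply Rdiv_le_0_compat; lra).
      replace (d2 / d1 * s) with (d2 * (s / d1)) by (field; lra).
      rewrite F2, <- F1 by exact Hsd. f_equal. field. lra. }
  intros H1 H2. destruct (Rtotal_order c1 c2) as [H | [H | H]]; [| exact H |]; exfalso.
  - exact (Hlt c1 c2 H1 H2 H).
  - exact (Hlt c2 c1 H2 H1 H).
Qed.

Lemma stable_scale_mul (r s c1 c2 : R) : 0 < r -> 0 < s ->
  stable_scale F r c1 -> stable_scale F s c2 -> stable_scale F (r * s) (c1 * c2).
Proof.
  intros Hr Hs [Hc1 F1] [Hc2 F2]. split; [apply Rmult_lt_0_compat; assumption|].
  intros t Ht. rewrite Rmult_assoc, F1, F2 by (try apply Rmult_le_pos; lra).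
  rewrite bpowM, Rinv_mult by (apply Rinv_0_lt_compat || apply (Delta_plus_01 F HF); lra).
  reflexivity.
Qed.

Lemma stable_scale_lt (r s c1 c2 : R) : 0 < r -> r < s ->
  stable_scale F r c1 -> stable_scale F s c2 -> c1 < c2.
Proof.
  intros Hr Hrs [Hc1 F1] [Hc2 F2]. apply Rnot_le_lt. intros Hc.
  pose proof (Delta_plus_le F HF (c2 * t0) (c1 * t0) ltac:(nra) ltac:(nra)) as Hle.
  rewrite F1, F2 in Hle by lra.
  pose proof (bpow_lt_exponent (/ s) (/ r) (F t0) ltac:(apply Rinv_0_lt_compat; lra)
    ltac:(apply Rinv_lt_contravar; nra) Ft0).
  lra.
Qed.

Lemma stable_scale_power :
  (forall r, 0 < r -> exists c, stable_scale F r c) ->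
  exists beta, 0 < beta /\ forall r, 0 < r -> stable_scale F r (Rpower r beta).
Proof.
  intros Hex. set (scale := fun r => epsilon (inhabits 1) (stable_scale F r)).
  assert (Hscale : forall r, 0 < r -> stable_scale F r (scale r))
    by (intros r Hr; apply epsilon_spec, Hex, Hr).
  destruct (increasing_multiplicative_power scale) as [beta [Hbeta Hpow]].
  - intros r Hr. apply (Hscale r Hr).
  - intros r s Hr Hs. apply (stable_scale_unique (r * s));
      [apply Hscale; nra | apply stable_scale_mul; auto].
  - intros r s Hr Hrs. apply (stable_scale_lt r s); auto; apply Hscale; lra.
  - exists beta. split; [exact Hbeta|]. intros r Hr. rewrite <- Hpow by exact Hr. auto.
Qed.

Lemma stable_power_scale_law (beta : R) : 0 < beta ->
  (forall r, 0 < r -> stable_scale F r (Rpower r beta)) ->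
  exists lambda, 0 < lambda /\
    forall t, 0 < t -> F t = / (1 + lambda * Rpower t (- / beta)).
Proof.
  intros Hbeta Hscale.
  set (alpha := / beta). set (y0 := F t0). set (u0 := / y0 - 1).
  assert (Hu0 : 0 < u0).
  { unfold u0. enough (/ 1 < / y0) by lra. apply Rinv_lt_contravar; unfold y0; lra. }
  assert (Hy0 : y0 = / (1 + u0)).
  { unfold u0. replace (1 + (/ y0 - 1)) with (/ y0) by ring. rewrite Rinv_inv. reflexivity. }
  exists (u0 * Rpower t0 alpha). split; [apply Rmult_lt_0_compat; [exact Hu0 | apply exp_pos]|].
  intros t Ht.
  (* the scale of [r := (t / t0) ^ alpha] is [t / t0] *)
  set (r := Rpower (t / t0) alpha).
  assert (Hr : 0 < r) by apply exp_pos.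
  assert (Hrbeta : Rpower r beta = t / t0).
  { unfold r, alpha. rewrite Rpower_mult, Rinv_l by lra.
    apply Rpower_1, Rdiv_lt_0_compat; lra. }
  destruct (Hscale r Hr) as [_ Hr_scale].
  specialize (Hr_scale t0 (Rlt_le _ _ t0_gt0)).
  rewrite Hrbeta in Hr_scale. replace (t / t0 * t0) with t in Hr_scale by (field; lra).
  rewrite Hr_scale. fold y0.
  rewrite Hy0, bpow_inv_1p; [| left; apply Rinv_0_lt_compat, Hr | left; exact Hu0].
  do 2 f_equal. unfold r, Rpower, Rdiv.
  rewrite <- exp_Ropp, ln_mult, ln_Rinv by (try apply Rinv_0_lt_compat; lra).
  rewrite Rmult_assoc, <- exp_plus, Rmult_comm. do 2 f_equal. ring.
Qed.

End StableScale.

Lemma power_law_max_stable (F : R -> R) (lambda alpha : R) :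
  in_Delta_plus F -> 0 < lambda -> 0 < alpha -> F 0 = 0 ->
  (forall t, 0 < t -> F t = / (1 + lambda * Rpower t (- alpha))) -> boolean_max_stable F.
Proof.
  intros HF Hl Ha F0 Hform.
  exists F, (fun n => Rpower (INR n) (/ alpha)).
  split; [exact HF|]. split; [intros n; apply exp_pos|].
  intros t Ht. apply (Un_cv_eventually_ext (fun _ => F t)); [|apply Un_cv_const].
  exists 1%nat. intros n Hn.
  assert (Hn' : 0 < INR n) by (apply lt_0_INR; lia).
  set (a := Rpower (INR n) (/ alpha)).
  assert (Ha_pos : 0 < a) by apply exp_pos.
  rewrite bmaxpow_bpow by (exact Hn || apply (Delta_plus_01 F HF); nra).
  destruct Ht as [Ht | <-]; [|rewrite Rmult_0_r, F0, bpow_level0; reflexivity].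
  assert (Hw : 0 < Rpower (a * t) (- alpha)) by apply exp_pos.
  rewrite !Hform, bpow_inv_1p by nra.
  do 2 f_equal.
  rewrite <- Rpower_mult_distr by assumption. unfold a.
  rewrite Rpower_mult, Ropp_mult_distr_r_reverse, Rinv_l, !Rpower_Ropp, Rpower_1 by lra.
  assert (0 < Rpower t alpha) by apply exp_pos.
  field. lra.
Qed.

Theorem corollary4p1 (F : R -> R) :
  in_Delta_plus F -> ~ degenerate F ->
  (boolean_max_stable F <->
   exists lambda alpha : R, 0 < lambda /\ 0 < alpha /\ F 0 = 0 /\
     forall t, 0 < t -> F t = / (1 + lambda * Rpower t (- alpha))).
Proof.
  intros HF Hnd. split.
  - intros [G [a [HG [Ha F_lim]]]].
    assert (F0 : F 0 = 0) by exact (max_stable_at0 F G a HG Ha F_lim Hnd).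
    destruct (nondegenerate_level F HF Hnd) as [t0 [[Ht0 | <-] Ft0]]; [|lra].
    destruct (stable_scale_power F t0 HF Ht0 Ft0
      (max_stable_scale_exists F G a HF HG Ha F_lim t0 F0 Ht0 Ft0)) as [beta [Hbeta Hscale]].
    destruct (stable_power_scale_law F t0 Ht0 Ft0 beta Hbeta Hscale) as [lambda [Hl Hform]].
    exists lambda, (/ beta). split; [exact Hl|]. split; [apply Rinv_0_lt_compat, Hbeta|]. auto.
  - intros [lambda [alpha [Hl [Halpha [F0 Hform]]]]].
    exact (power_law_max_stable F lambda alpha HF Hl Halpha F0 Hform).
Qed.
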